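(* Let $S$ be an intra-regular $\Gamma$-AG$^{**}$-groupoid and $A\subseteq S$. Then $A$ is a left $\Gamma$-ideal of $S$ if and only if $A$ is a right $\Gamma$-ideal of $S$.
   Context: Let $S$ and $\Gamma$ be nonempty sets with a map $S\times\Gamma\times S\to S$, $(x,\gamma,y)\mapsto x\gamma y$. $S$ is a $\Gamma$-AG-groupoid if $(x\gamma y)\delta z=(z\gamma y)\delta x$ for all $x,y,z\in S$, $\gamma,\delta\in\Gamma$; it is a $\Gamma$-AG$^{**}$-groupoid if moreover $a\alpha(b\beta c)=b\alpha(a\beta c)$ for all $a,b,c\in S$, $\alpha,\beta\in\Gamma$. For subsets $A,B\subseteq S$, $A\Gamma B=\{a\gamma b: a\in A,\gamma\in\Gamma,b\in B\}$. $S$ is intra-regular if for every $a\in S$ there exist $x,y\in S$ and $\beta,\gamma,\delta\in\Gamma$ with $a=(x\beta(a\delta a))\gamma y$. A nonempty subset $A$ is a left (right) $\Gamma$-ideal if $S\Gamma A\subseteq A$ ($A\Gamma S\subseteq A$). *)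

Definition GammaAG {S G : Type} (op : S -> G -> S -> S) : Prop :=
  forall (x y z : S) (g d : G), op (op x g y) d z = op (op z g y) d x.

Definition GammaAGss {S G : Type} (op : S -> G -> S -> S) : Prop :=
  GammaAG op /\
  forall (a b c : S) (al be : G), op a al (op b be c) = op b al (op a be c).

Definition intra_regular {S G : Type} (op : S -> G -> S -> S) : Prop :=
  forall a : S, exists (x y : S) (be ga de : G),
    a = op (op x be (op a de a)) ga y.

Definition left_Gamma_ideal {S G : Type} (op : S -> G -> S -> S) (A : S -> Prop) : Prop :=
  (exists a, A a) /\ forall (s : S) (g : G) (a : S), A a -> A (op s g a).

Definition right_Gamma_ideal {S G : Type} (op : S -> G -> S -> S) (A : S -> Prop) : Prop :=
  (exists a, A a) /\ forall (a : S) (g : G) (s : S), A a -> A (op a g s).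


(* Write an element as a = (x β (a δ a)) γ y.  The left invertive law moves a
   product a γ' s into the form (s γ y) γ' (x β (a δ a)), which lies in every left
   ideal containing a; the law a(bc) = b(ac) moves s γ' a into the form
   (a β (x δ a)) γ' (s γ y), which lies in every right ideal containing a. *)

Section IntraRegularIdeals.

Variables (S G : Type) (op : S -> G -> S -> S).

Lemma intra_regular_mulr (x y a s : S) (be ga de g : G) :
  GammaAG op -> a = op (op x be (op a de a)) ga y ->
  op a g s = op (op s ga y) g (op x be (op a de a)).
Proof.
  intros hAG Ea.
  pattern a at 1; rewrite Ea.
  apply hAG.
Qed.

Lemma intra_regular_mull (x y a s : S) (be ga de g : G) :
  GammaAGss op -> a = op (op x be (op a de a)) ga y ->
  op s g a = op (op a be (op x de a)) g (op s ga y).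
Proof.
  intros [_ hperm] Ea.
  pattern a at 1; rewrite Ea.
  rewrite hperm, (hperm x a a).
  reflexivity.
Qed.

Lemma left_ideal_closed_mulr (A : S -> Prop) :
  GammaAG op -> intra_regular op -> left_Gamma_ideal op A ->
  forall (a : S) (g : G) (s : S), A a -> A (op a g s).
Proof.
  intros hAG hIR [_ hleft] a g s Aa.
  destruct (hIR a) as [x [y [be [ga [de Ea]]]]].
  rewrite (intra_regular_mulr x y a s be ga de g hAG Ea).
  apply hleft, hleft, hleft, Aa.
Qed.

Lemma right_ideal_closed_mull (A : S -> Prop) :
  GammaAGss op -> intra_regular op -> right_Gamma_ideal op A ->
  forall (s : S) (g : G) (a : S), A a -> A (op s g a).
Proof.
  intros hAGss hIR [_ hright] s g a Aa.
  destruct (hIR a) as [x [y [be [ga [de Ea]]]]].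
  rewrite (intra_regular_mull x y a s be ga de g hAGss Ea).
  apply hright, hright, Aa.
Qed.

End IntraRegularIdeals.

Theorem mainTheorem4 (S G : Type) (op : S -> G -> S -> S)
  (hS : inhabited S) (hG : inhabited G)
  (hAG : GammaAGss op) (hIR : intra_regular op) (A : S -> Prop) :
  left_Gamma_ideal op A <-> right_Gamma_ideal op A.
Proof.
  split; intros hA; split; try apply hA.
  - exact (left_ideal_closed_mulr S G op A (proj1 hAG) hIR hA).
  - exact (right_ideal_closed_mull S G op A hAG hIR hA).
Qed.
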